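(* If there exists a $1$-perfect code in $H(q+1,q)$, then the vertex set of $H(q,q)$ can be partitioned into distance-$2$ MDS codes $M^0,\dots,M^{q-1}$ such that each $M^i$ is a union of $q$ pairwise disjoint distance-$3$ MDS codes.
   Context: The Hamming graph $H(n,q)$ has vertex set $\mathbb{Z}_q^n$ with the Hamming distance $d$ (number of differing coordinates); vertices at distance $1$ are adjacent. A distance-$d$ MDS code in $H(n,q)$ is a set of $q^{n-d+1}$ vertices with pairwise Hamming distance at least $d$. A $1$-perfect code in $H(n,q)$ is a set $C$ of vertices such that every ball $\{y: d(x,y)\le1\}$ contains exactly one element of $C$. *)

From mathcomp Require Import all_boot.
Set Implicit Arguments. Unset Strict Implicit. Unset Printing Implicit Defensive.

Definition vertex (n q : nat) := {ffun 'I_n -> 'I_q}.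

Definition hdist (n q : nat) (x y : vertex n q) : nat := #|[set i | x i != y i]|.

Definition is_MDS_code (n q d : nat) (C : {set vertex n q}) : Prop :=
  #|C| = q ^ (n.+1 - d) /\
  (forall x y, x \in C -> y \in C -> x != y -> d <= hdist x y).

Definition is_1perfect_code (n q : nat) (C : {set vertex n q}) : Prop :=
  forall x : vertex n q, #|[set c in C | hdist x c <= 1]| = 1.

From mathcomp Require Import all_boot.
From mathcomp Require Import ssralg zmodp.
Set Implicit Arguments. Unset Strict Implicit. Unset Printing Implicit Defensive.
Import GRing.Theory.

(* A 1-perfect code C in H(q+1,q) has minimum distance 3, so two codewords
   agreeing outside two coordinates are equal; conversely a counting argument
   shows that every word agrees with some codeword outside any two given
   coordinates.  Hence puncturing the last coordinate of C gives a distance-2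
   code of size q^(q-1) in H(q,q), whose q translates along the first
   coordinate partition H(q,q); grouping the codewords by their last
   coordinate splits each translate into q punctured shortened codes of
   distance 3. *)

Definition upd n q (x : vertex n q) (i : 'I_n) (v : 'I_q) : vertex n q :=
  [ffun k => if k == i then v else x k].

Section Hamming.
Variables n q : nat.
Implicit Types (x y c : vertex n q) (C : {set vertex n q}).

Lemma hdist_sum x y : hdist x y = \sum_i (x i != y i).
Proof.
rewrite /hdist -sum1_card big_mkcond /=; apply: eq_bigr => i _.
by rewrite inE; case: (x i != y i).
Qed.

Lemma hdist_le_card x y (S : {set 'I_n}) :
  (forall k, k \notin S -> x k = y k) -> hdist x y <= #|S|.
Proof.
move=> xy; apply: subset_leq_card; apply/subsetP => k; rewrite inE.
by apply: contraR => /xy ->.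
Qed.

Lemma hdist_le2 x y a b :
  (forall k, k != a -> k != b -> x k = y k) -> hdist x y <= 2.
Proof.
move=> xy; apply: leq_trans (hdist_le_card (S := [set a; b]) _) _.
  by move=> k; rewrite !inE negb_or => /andP[]; apply: xy.
by rewrite cards2; case: (a != b).
Qed.

Lemma hdist_le1_agree x y i k : hdist x y <= 1 -> x i != y i -> k != i -> x k = y k.
Proof.
move=> d1 xyi ki; apply/eqP; apply: contraTT d1 => xyk; rewrite -ltnNge.
apply: leq_trans (_ : #|[set i; k]| <= _); first by rewrite cards2 eq_sym ki.
by apply: subset_leq_card; apply/subsetP => j; rewrite !inE => /orP[]/eqP->.
Qed.

Lemma hdist_upd x i v : hdist (upd x i v) x <= 1.
Proof.
rewrite -(cards1 i); apply: hdist_le_card => k; rewrite inE ffunE.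
by move/negPf->.
Qed.

Lemma perfect_code_near C x : is_1perfect_code C -> exists2 c, c \in C & hdist x c <= 1.
Proof.
move=> /(_ x)/eqP/cards1P[c Ec].
by have := set11 c; rewrite -Ec inE => /andP[]; exists c.
Qed.

Lemma perfect_code_dist3 C : is_1perfect_code C ->
  forall c c', c \in C -> c' \in C -> c != c' -> 3 <= hdist c c'.
Proof.
move=> HC c c' Cc Cc' cc'; rewrite leqNgt; apply/negP => d2.
have [i ci] : exists i, c i != c' i.
  apply/existsP; apply: contraR cc' => /existsPn eqc.
  by apply/eqP/ffunP => i; apply/eqP/negPn.
pose x := upd c i (c' i).
have xc' : hdist x c' <= 1.
  rewrite (leq_trans _ (_ : #|[set k | c k != c' k] :\ i| <= 1)) //.
    apply: hdist_le_card => k; rewrite !inE ffunE negb_and negbK.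
    by case: eqP => [->|_ /negPn/eqP].
  by move: d2; rewrite /hdist (cardsD1 i) inE ci.
suff : #|[set c; c']| <= #|[set c0 in C | hdist x c0 <= 1]| by rewrite HC cards2 cc'.
apply/subset_leq_card/subsetP => k; rewrite !inE.
by case/orP => /eqP->; rewrite ?Cc ?Cc' ?xc' ?hdist_upd.
Qed.

Lemma card_pairs_off2 (a b : 'I_n) (z : vertex n q) : a != b ->
  #|[set p : 'I_n * 'I_q | [&& p.1 != a, p.1 != b & p.2 != z p.1]]| = (n - 2) * q.-1.
Proof.
move=> ab.
have -> : #|[set p : 'I_n * 'I_q | [&& p.1 != a, p.1 != b & p.2 != z p.1]]| =
    \sum_(i | (i != a) && (i != b)) \sum_(x | x != z i) 1.
  by rewrite pair_big_dep -sum1_card; apply: eq_bigl => -[i x]; rewrite inE andbA.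
rewrite (eq_bigr (fun=> q.-1)) => [|i _]; last first.
  by rewrite sum1_card cardC1 card_ord.
rewrite sum_nat_const; congr (_ * _).
have := cardsD1 b [set~ a]; rewrite cardsC1 card_ord !inE eq_sym ab add1n.
move=> /(congr1 predn) /=; rewrite -subn2 => ->.
by apply: eq_card => i; rewrite !inE andbC.
Qed.

Lemma perfect_code_cover C (a b : 'I_n) (z : vertex n q) :
  is_1perfect_code C -> a != b -> (n - 2) * q.-1 < q * q ->
  exists2 c, c \in C & forall k, k != a -> k != b -> c k = z k.
Proof.
move=> HC ab small; have dist3 := perfect_code_dist3 HC.
(* Otherwise, for each (u,v) the codeword nearest to z with coordinates a, b
   set to u, v differs from that word in exactly one coordinate i outside
   {a,b}; (u,v) |-> (i, value at i) is then injective, but it has only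
   (n-2)(q-1) possible values. *)
case: (boolP [exists c in C, [forall k, (k != a) ==> (k != b) ==> (c k == z k)]]).
  case/exists_inP => c Cc /forallP cz; exists c => // k ka kb.
  by apply/eqP; move: (cz k); rewrite ka kb.
move/exists_inPn => none; exfalso.
pose w (uv : 'I_q * 'I_q) := upd (upd z a uv.1) b uv.2.
have wz uv k : k != a -> k != b -> w uv k = z k.
  by rewrite !ffunE => /negPf-> /negPf->.
have /fin_all_exists2[f fC fw] := fun uv => perfect_code_near (w uv) HC.
have /fin_all_exists[i iP] : forall uv, exists k, [&& k != a, k != b & f uv k != z k].
  by move=> uv; have /forallPn[k] := none _ (fC uv); rewrite !negb_imply; exists k.
have f_agree uv k : k != i uv -> f uv k = w uv k.
  case/and3P: (iP uv) => ia ib fz ki; symmetry.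
  by apply: (hdist_le1_agree (fw uv)) ki; rewrite wz // eq_sym.
have f_ab uv : f uv a = uv.1 /\ f uv b = uv.2.
  case/and3P: (iP uv) => ia ib _.
  by rewrite !f_agree 1?eq_sym // !ffunE eqxx (negPf ab) eqxx.
pose g uv := (i uv, f uv (i uv)).
have g_inj : injective g.
  move=> uv uv' [ii' fi'].
  have le2 : hdist (f uv) (f uv') <= 2.
    apply: (hdist_le2 (a := a) (b := b)) => k ka kb.
    case: (eqVneq k (i uv)) => [->|ki]; first by rewrite fi' ii'.
    by rewrite !f_agree -?ii' // !wz.
  have ff : f uv = f uv'.
    apply/eqP; apply: contraT => ne.
    by have := dist3 _ _ (fC uv) (fC uv') ne; rewrite leqNgt ltnS le2.
  move: (f_ab uv) (f_ab uv'); rewrite ff => -[ea eb] [ea' eb'].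
  by apply: injective_projections; congruence.
have sub : g @: [set: 'I_q * 'I_q] \subset
    [set p : 'I_n * 'I_q | [&& p.1 != a, p.1 != b & p.2 != z p.1]].
  by apply/subsetP => _ /imsetP[uv _ ->]; rewrite inE iP.
have := subset_leq_card sub.
by rewrite card_imset // cardsT card_prod card_ord card_pairs_off2 // leqNgt small.
Qed.
End Hamming.

Definition puncture n q (x : vertex n.+1 q) : vertex n q :=
  [ffun k => x (widen_ord (leqnSn n) k)].

Definition shift0 n q (i : 'I_q.+1) (y : vertex n.+1 q.+1) : vertex n.+1 q.+1 :=
  upd y ord0 (y ord0 + i)%R.

Lemma widen_neq_max n (k : 'I_n) : widen_ord (leqnSn n) k != ord_max.
Proof. by rewrite -(inj_eq val_inj) /= neq_ltn ltn_ord. Qed.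

Lemma inord_widen n (k : 'I_n.+1) : inord (widen_ord (leqnSn n.+1) k) = k.
Proof. by apply: val_inj; rewrite /= inordK. Qed.

Lemma hdist_xx n q (x : vertex n q) : hdist x x = 0.
Proof. by rewrite hdist_sum big1 // => i _; rewrite eqxx. Qed.

Lemma hdist_puncture n q (x y : vertex n.+1 q) :
  hdist x y = hdist (puncture x) (puncture y) + (x ord_max != y ord_max).
Proof.
rewrite !hdist_sum big_ord_recr; congr (_ + _).
by apply: eq_bigr => k _; rewrite !ffunE.
Qed.

Lemma hdist_shift0 n q (i : 'I_q.+1) (x y : vertex n.+1 q.+1) :
  hdist (shift0 i x) (shift0 i y) = hdist x y.
Proof.
rewrite !hdist_sum; apply: eq_bigr => k _; rewrite !ffunE.
by case: ifP => [/eqP->|//]; rewrite (inj_eq (addIr i)).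
Qed.

Lemma shift0_inj n q (i : 'I_q.+1) : injective (@shift0 n q i).
Proof.
move=> x y /ffunP exy; apply/ffunP => k; have := exy k; rewrite !ffunE.
by case: ifP => [/eqP-> /addIr|].
Qed.

Lemma card_bigcup_disjoint (T I : finType) (F : I -> {set T}) :
  (forall i j, i != j -> [disjoint F i & F j]) -> #|\bigcup_i F i| = \sum_i #|F i|.
Proof.
move=> disjF; rewrite -sum1_card partition_disjoint_bigcup //.
by apply: eq_bigr => i _; rewrite sum1_card.
Qed.

Lemma mulnI_expn_pred m x : m.+1 * x = m.+1 ^ m -> x = m.+1 ^ m.-1.
Proof.
case: m => [|m]; first by rewrite mul1n.
by rewrite expnS => /eqP; rewrite eqn_pmul2l // => /eqP.
Qed.

Section PerfectCode.
Variables (p : nat) (C : {set vertex p.+2 p.+1}).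
Hypothesis HC : is_1perfect_code C.

Let dist3 := perfect_code_dist3 HC.

Lemma code_cover (a b : 'I_p.+2) (z : vertex p.+2 p.+1) : a != b ->
  exists2 c, c \in C & forall k, k != a -> k != b -> c k = z k.
Proof.
by move=> ab; apply: perfect_code_cover HC ab _; rewrite subSS subSS subn0 ltn_mul.
Qed.

Lemma codeword_eq c c' : c \in C -> c' \in C -> hdist c c' <= 2 -> c = c'.
Proof.
move=> Cc Cc' d2; apply/eqP; apply: contraT => ne.
by have := dist3 Cc Cc' ne; rewrite leqNgt ltnS d2.
Qed.

Lemma codeword_eq_puncture c c' : c \in C -> c' \in C ->
  hdist (puncture c) (puncture c') <= 1 -> c = c'.
Proof.
move=> Cc Cc' d1; apply: codeword_eq => //; rewrite hdist_puncture.
by apply: leq_add d1 _; case: (_ != _).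
Qed.

Definition shifted_punctured i := [set shift0 i (puncture c) | c in C].
Definition last_fibre j := [set c in C | c ord_max == j].
Definition shifted_shortened i j := [set shift0 i (puncture c) | c in last_fibre j].

Lemma shift0_puncture_inj (i : 'I_p.+1) :
  {in C &, injective (fun c => shift0 i (puncture c))}.
Proof.
move=> c c' Cc Cc' /shift0_inj pcc'; apply: codeword_eq_puncture => //.
by rewrite pcc' hdist_xx.
Qed.

Lemma card_shifted_punctured i : #|shifted_punctured i| = #|C|.
Proof. exact: card_in_imset (@shift0_puncture_inj i). Qed.

Lemma shifted_punctured_disjoint i j : i != j ->
  [disjoint shifted_punctured i & shifted_punctured j].
Proof.
rewrite -setI_eq0; apply: contraR => /set0Pn[_ /setIP[/imsetP[c Cc ->]]].
case/imsetP=> c' Cc' e.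
have cc' : c = c'.
  apply: codeword_eq_puncture => //; rewrite -(cards1 (ord0 : 'I_p.+1)).
  apply: hdist_le_card => k; rewrite inE => k0.
  by have := congr1 (fun y : vertex p.+1 p.+1 => y k) e; rewrite !ffunE (negPf k0).
have := congr1 (fun y : vertex p.+1 p.+1 => y ord0) e.
by rewrite !ffunE eqxx cc' => /addrI->.
Qed.

Lemma shifted_punctured_cover :
  \bigcup_(i < p.+1) shifted_punctured i = [set: vertex p.+1 p.+1].
Proof.
apply/setP => y; rewrite inE; apply/bigcupP.
have [c Cc cy] := @code_cover ord0 ord_max [ffun k : 'I_p.+2 => y (inord k)] isT.
exists (y ord0 - puncture c ord0)%R => //; apply/imsetP; exists c => //.
apply/ffunP => k; rewrite !ffunE.
case: eqP => [->|/eqP k0]; first by rewrite addrC subrK.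
by rewrite cy ?widen_neq_max // ffunE inord_widen.
Qed.

Lemma card_code : #|C| = p.+1 ^ p.
Proof.
have := card_bigcup_disjoint shifted_punctured_disjoint.
rewrite shifted_punctured_cover cardsT card_ffun !card_ord.
under eq_bigr do rewrite card_shifted_punctured.
by rewrite sum_nat_const card_ord expnS => /eqP; rewrite eqn_pmul2l // => /eqP.
Qed.

Lemma shifted_punctured_dist i x y : x \in shifted_punctured i ->
  y \in shifted_punctured i -> x != y -> 2 <= hdist x y.
Proof.
move=> /imsetP[c Cc ->] /imsetP[c' Cc' ->] ne.
have cc' : c != c' by apply: contraNneq ne => ->.
have := dist3 Cc Cc' cc'; rewrite hdist_shift0 hdist_puncture.
by case: (_ != _); rewrite ?addn1 ?addn0 // => /ltnW.
Qed.

Lemma shifted_shortened_dist i j x y : x \in shifted_shortened i j ->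
  y \in shifted_shortened i j -> x != y -> 3 <= hdist x y.
Proof.
move=> /imsetP[c /setIdP[Cc /eqP cj] ->] /imsetP[c' /setIdP[Cc' /eqP c'j] ->] ne.
have cc' : c != c' by apply: contraNneq ne => ->.
by have := dist3 Cc Cc' cc'; rewrite hdist_shift0 hdist_puncture cj c'j eqxx addn0.
Qed.

Lemma shifted_shortened_disjoint i j j' : j != j' ->
  [disjoint shifted_shortened i j & shifted_shortened i j'].
Proof.
rewrite -setI_eq0; apply: contraR.
move=> /set0Pn[_ /setIP[]] /imsetP[c /setIdP[Cc /eqP cj] ->].
case/imsetP=> c' /setIdP[Cc' /eqP c'j] e.
by rewrite -cj -c'j (shift0_puncture_inj Cc Cc' e).
Qed.

Lemma shifted_punctured_bigcup i :
  shifted_punctured i = \bigcup_(j < p.+1) shifted_shortened i j.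
Proof.
apply/setP => x; apply/imsetP/bigcupP => [[c Cc ->]|[j _ /imsetP[c /setIdP[Cc _] ->]]].
  by exists (c ord_max) => //; apply: imset_f; rewrite inE Cc /=.
by exists c.
Qed.

Lemma card_shifted_shortened i j : #|shifted_shortened i j| = #|last_fibre j|.
Proof.
apply: card_in_imset => c c' /setIdP[Cc _] /setIdP[Cc' _].
exact: shift0_puncture_inj.
Qed.

Lemma card_last_fibre_le (b : 'I_p.+2) j j' : ord0 != b -> b != ord_max ->
  #|last_fibre j| <= #|last_fibre j'|.
Proof.
move=> b0 bmax.
have /fin_all_exists2[f fC f_agree] := fun c => code_cover (upd c ord_max j') b0.
have f_inj : {in last_fibre j &, injective f}.
  move=> c c' /setIdP[Cc /eqP cj] /setIdP[Cc' /eqP c'j] e.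
  apply: codeword_eq => //; apply: (hdist_le2 (a := ord0) (b := b)) => k k0 kb.
  case: (eqVneq k ord_max) => [->|kmax]; first by rewrite cj c'j.
  by have := f_agree c k k0 kb; rewrite e f_agree // !ffunE (negPf kmax).
rewrite -(card_in_imset f_inj); apply/subset_leq_card/subsetP => _ /imsetP[c _ ->].
by apply/setIdP; rewrite fC f_agree 1?eq_sym // ffunE eqxx.
Qed.

Lemma card_last_fibre j : #|last_fibre j| = p.+1 ^ p.-1.
Proof.
have fibres_eq j' : #|last_fibre j'| = #|last_fibre j|.
  have [p0|p_gt0] := posnP p.
    suff -> : j' = j by [].
    apply: val_inj; move: (ltn_ord j) (ltn_ord j') => /=.
    move: (nat_of_ord j) (nat_of_ord j'); rewrite p0 => a b.
    by rewrite !ltnS !leqn0 => /eqP-> /eqP->.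
  have b0 : ord0 != inord 1 :> 'I_p.+2 by rewrite -(inj_eq val_inj) /= inordK.
  have bmax : inord 1 != ord_max :> 'I_p.+2.
    by rewrite -(inj_eq val_inj) /= inordK // eqSS eq_sym -lt0n.
  by apply/eqP; rewrite eqn_leq !(card_last_fibre_le _ _ b0 bmax).
apply: mulnI_expn_pred; rewrite -card_code -[#|C|]sum1_card.
rewrite (partition_big (fun c : vertex p.+2 p.+1 => c ord_max) predT) //=.
rewrite (eq_bigr (fun=> #|last_fibre j|)) => [|j' _].
  by rewrite sum_nat_const card_ord.
by rewrite -(fibres_eq j') -sum1_card; apply: eq_bigl => c; rewrite inE.
Qed.

End PerfectCode.

Theorem proposition8 (q : nat) (hq : 0 < q) :
  (exists C : {set vertex q.+1 q}, is_1perfect_code C) ->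
  exists M : 'I_q -> {set vertex q q},
    (forall i j, i != j -> [disjoint M i & M j]) /\
    (\bigcup_(i < q) M i = [set: vertex q q]) /\
    (forall i, is_MDS_code 2 (M i)) /\
    (forall i, exists N : 'I_q -> {set vertex q q},
       (forall j, is_MDS_code 3 (N j)) /\
       (forall j k, j != k -> [disjoint N j & N k]) /\
       M i = \bigcup_(j < q) N j).
Proof.
case: q hq => [//|p] _ [C HC].
exists (shifted_punctured C); split; first exact: (shifted_punctured_disjoint HC).
split; first exact: (shifted_punctured_cover HC).
split=> i.
  split=> [|x y]; last exact: (shifted_punctured_dist HC).
  by rewrite (card_shifted_punctured HC) (card_code HC) subSS subSS subn0.
exists (shifted_shortened C i); split; last split.
- move=> j; split=> [|x y]; last exact: (shifted_shortened_dist HC).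
  by rewrite (card_shifted_shortened HC) (card_last_fibre HC) !subSS subn1.
- exact: (shifted_shortened_disjoint HC).
- exact: shifted_punctured_bigcup.
Qed.
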